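(* Let $((\beta_\ell,B_\ell))_{\ell\ge1}$ be a sequence with $\beta_\ell$ and $B_\ell$ non-increasing, $\beta_\ell\ge\beta_c$, $B_\ell>0$, $\beta_\ell\searrow\beta_c$ and $B_\ell\searrow0$. Then $\lim_{\ell\to\infty}z^*(\beta_\ell,B_\ell)=0$. In particular $\lim_{B\searrow0}z^*(\beta_c,B)=0$ and $\lim_{\beta\searrow\beta_c}z^*(\beta,0^+)=0$, where $z^*(\beta,0^+)=\lim_{B\searrow0}z^*(\beta,B)$.
   Context: $W\ge0$ is a random variable with $\mathbb E[W^2]<\infty$ and $\mathbb E[W]>0$; $\nu=\mathbb E[W^2]/\mathbb E[W]$, $\beta_c={\rm asinh}(1/\nu)$, $\alpha(\beta)=\sqrt{\sinh(\beta)/\mathbb E[W]}$. For $B>0$, $z^*(\beta,B)$ denotes the unique positive solution $z$ of $z=\mathbb E[\tanh(\alpha(\beta)Wz+B)\,\alpha(\beta)W]$; it is non-negative and monotone (non-decreasing) in $\beta$ and $B$. *)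

From Stdlib Require Import Reals Lra.
Open Scope R_scope.

(* The law of the random variable W >= 0 is encoded by its quantile function
   Q : (0,1) -> [0,oo), nondecreasing; W has the law of Q(U), U uniform on (0,1).
   Every law on [0,oo) arises this way. *)
Definition quantile (Q : R -> R) : Prop :=
  (forall u, 0 < u < 1 -> 0 <= Q u) /\
  (forall u v, 0 < u -> u <= v -> v < 1 -> Q u <= Q v).

Definition lsum (f : R -> R) (a b : R) (n : nat) : R :=
  sum_f_R0 (fun k => (b - a) / INR (S n) * f (a + INR k * (b - a) / INR (S n))) n.

Definition lsums (Q : R -> R) (h : R -> R) (x : R) : Prop :=
  exists a b n, 0 < a /\ a <= b /\ b < 1 /\ x = lsum (fun u => h (Q u)) a b n.

(* Expect Q h e  <->  E[h(W)] = e (finite), for h nonnegative and nondecreasing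
   on [0,oo): then E[h(W)] = int_0^1 h(Q u) du, the (improper) integral of a
   nonnegative nondecreasing function, which equals the sup of these sums. *)
Definition Expect (Q : R -> R) (h : R -> R) (e : R) : Prop :=
  is_lub (lsums Q h) e.

(* m1 = E[W] *)
Definition betac (m1 m2 : R) : R := arcsinh (1 / (m2 / m1)).
Definition alpha (m1 beta : R) : R := sqrt (sinh beta / m1).

(* z is a positive solution of z = E[tanh(alpha(beta) W z + B) alpha(beta) W];
   by the context this solution is unique, i.e. z = z^*(beta,B). *)
Definition Zstar (Q : R -> R) (m1 beta B z : R) : Prop :=
  0 < z /\
  Expect Q (fun w => tanh (alpha m1 beta * w * z + B) * alpha m1 beta * w) z.

From Stdlib Require Import Reals Lra Psatz Lia.
From Coquelicot Require Import Coquelicot.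
Open Scope R_scope.

(* For every eta > 0 and x >= 0, tanh x <= (1 - rho) x + rho eta with
   rho = tanh(eta)^2, and tanh (x + B) <= tanh x + B.  Inserted into the
   fixed-point equation this gives
     z <= (1 - rho) alpha^2 E[W^2] z + (rho eta + B) alpha E[W],
   where alpha^2 E[W^2] = sinh beta / sinh beta_c is close to 1 for beta close
   to beta_c.  Hence rho z / 2 <= (rho eta + B) alpha E[W], so z is small,
   uniformly for (beta, B) near (beta_c, 0).  The statement about z^*(beta, 0+)
   also needs that z^*(beta, B) exists for beta > beta_c: it is a fixed point of
   the Lipschitz map z |-> E[tanh(alpha W z + B) alpha W], which is positive at
   z = 0 and bounded by alpha E[W], so the intermediate value theorem applies. *)

Lemma tanh_exp x : tanh x = (exp x - exp (-x)) / (exp x + exp (-x)).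
Proof.
  unfold tanh, sinh, cosh.
  assert (0 < exp x) by apply exp_pos; assert (0 < exp (-x)) by apply exp_pos.
  field; lra.
Qed.

Lemma is_derive_tanh x : is_derive tanh x (1 - tanh x ^ 2).
Proof.
  apply (is_derive_ext (fun t => (exp t - exp (-t)) / (exp t + exp (-t)))).
  { intros t; symmetry; apply tanh_exp. }
  assert (0 < exp x) by apply exp_pos; assert (0 < exp (-x)) by apply exp_pos.
  auto_derive; [lra|].
  rewrite tanh_exp; field; lra.
Qed.

Lemma tanh_bounds x : -1 < tanh x < 1.
Proof.
  rewrite tanh_exp.
  assert (0 < exp x) by apply exp_pos; assert (0 < exp (-x)) by apply exp_pos.
  split; [apply Rlt_div_r | apply Rlt_div_l]; lra.
Qed.

Lemma tanh_0 : tanh 0 = 0.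
Proof. unfold tanh; rewrite sinh_0; lra. Qed.

Lemma tanh_pos x : 0 < x -> 0 < tanh x.
Proof.
  intros Hx; rewrite tanh_exp.
  assert (exp (-x) < exp x) by (apply exp_increasing; lra).
  assert (0 < exp (-x)) by apply exp_pos.
  apply Rdiv_lt_0_compat; lra.
Qed.

Lemma tanh_ge0 x : 0 <= x -> 0 <= tanh x.
Proof.
  intros [Hx | <-]; [left; apply tanh_pos | rewrite tanh_0]; lra.
Qed.

Lemma tanh_le x : 0 <= x -> tanh x <= x.
Proof.
  intros Hx.
  destruct (MVT_cor4 (fun t => t - tanh t) (fun t => tanh t ^ 2) 0 x) with (b := x)
    as [c [Hc _]].
  - intros c _.
    replace (tanh c ^ 2) with (1 - (1 - tanh c ^ 2)) by ring.
    apply (is_derive_minus (fun t => t) tanh c 1);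
      [apply (is_derive_id (K := R_AbsRing)) | apply is_derive_tanh].
  - rewrite Rminus_0_r, Rabs_pos_eq; lra.
  - rewrite tanh_0 in Hc; nra.
Qed.

Lemma tanh_lipschitz a b : Rabs (tanh a - tanh b) <= Rabs (a - b).
Proof.
  destruct (MVT_cor4 tanh (fun t => 1 - tanh t ^ 2) b (Rabs (a - b))) with (b := a)
    as [c [Hc _]]; [intros; apply is_derive_tanh | lra |].
  rewrite Hc, Rabs_mult.
  pose proof (tanh_bounds c); pose proof (Rabs_pos (a - b)).
  rewrite (Rabs_pos_eq (1 - tanh c ^ 2)); nra.
Qed.

Lemma tanh_add_mul a b : tanh (a + b) * (1 + tanh a * tanh b) = tanh a + tanh b.
Proof.
  rewrite !tanh_exp, Ropp_plus_distr, !exp_plus.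
  assert (0 < exp a) by apply exp_pos; assert (0 < exp (-a)) by apply exp_pos.
  assert (0 < exp b) by apply exp_pos; assert (0 < exp (-b)) by apply exp_pos.
  field; nra.
Qed.

Lemma tanh_addr_le x B : 0 <= x -> 0 <= B -> tanh (x + B) <= tanh x + B.
Proof.
  intros Hx HB.
  pose proof (tanh_add_mul x B).
  pose proof (tanh_ge0 x Hx); pose proof (tanh_ge0 B HB).
  pose proof (tanh_ge0 (x + B) ltac:(lra)); pose proof (tanh_le B HB).
  assert (0 <= tanh (x + B) * (tanh x * tanh B)) by (apply Rmult_le_pos; nra).
  nra.
Qed.

(* The right-hand side lies above the identity on [0, eta] and above the
   tangent of tanh at eta on [eta, oo). *)
Lemma tanh_le_affine eta x : 0 < eta -> 0 <= x ->
  tanh x <= (1 - tanh eta ^ 2) * x + tanh eta ^ 2 * eta.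
Proof.
  intros Heta Hx.
  pose proof (tanh_bounds eta); pose proof (tanh_pos eta Heta).
  pose proof (tanh_le eta ltac:(lra)).
  destruct (Rle_lt_dec x eta) as [Hle | Hlt].
  { pose proof (tanh_le x Hx); nra. }
  pose proof (tanh_add_mul eta (x - eta)) as Hadd.
  replace (eta + (x - eta)) with x in Hadd by ring.
  pose proof (tanh_ge0 (x - eta) ltac:(lra)); pose proof (tanh_le (x - eta) ltac:(lra)).
  pose proof (tanh_bounds (x - eta)).
  set (u := tanh eta) in *; set (v := tanh (x - eta)) in *.
  assert (Htangent : tanh x <= u + (1 - u ^ 2) * v).
  { apply (Rmult_le_reg_r (1 + u * v)); [nra |].
    rewrite Hadd.
    assert (0 <= (1 - u ^ 2) * u * v * v).
    { apply Rmult_le_pos; [apply Rmult_le_pos; [apply Rmult_le_pos|] |]; nra. }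
    nra. }
  assert ((1 - u ^ 2) * v <= (1 - u ^ 2) * (x - eta)) by (apply Rmult_le_compat_l; nra).
  nra.
Qed.

Lemma sum_f_R0_affine (X Y : nat -> R) c1 c2 c3 n :
  sum_f_R0 (fun k => c1 * X k + c2 * Y k + c3) n =
  c1 * sum_f_R0 X n + c2 * sum_f_R0 Y n + c3 * INR (S n).
Proof.
  induction n as [|n IH]; simpl sum_f_R0; [simpl; ring |].
  rewrite IH, (S_INR (S n)); ring.
Qed.

Lemma lsum_affine f f1 f2 c1 c2 c3 a b n :
  (forall u, f u = c1 * f1 u + c2 * f2 u + c3) ->
  lsum f a b n = c1 * lsum f1 a b n + c2 * lsum f2 a b n + c3 * (b - a).
Proof.
  intros Hf; unfold lsum.
  set (d := (b - a) / INR (S n)).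
  set (p := fun k => a + INR k * (b - a) / INR (S n)).
  transitivity (sum_f_R0 (fun k => c1 * (d * f1 (p k)) + c2 * (d * f2 (p k)) + c3 * d) n).
  { apply sum_eq; intros k _; unfold p; rewrite Hf; ring. }
  rewrite sum_f_R0_affine; f_equal; unfold d.
  assert (0 < INR (S n)) by (apply lt_0_INR; lia).
  field; lra.
Qed.

Lemma lsum_le f g a b n :
  a <= b -> (forall u, a <= u <= b -> f u <= g u) -> lsum f a b n <= lsum g a b n.
Proof.
  intros Hab Hfg; unfold lsum; apply sum_Rle; intros k Hk.
  assert (HS : 0 < INR (S n)) by (apply lt_0_INR; lia).
  assert (INR k <= INR (S n)) by (apply le_INR; lia).
  pose proof (pos_INR k).
  apply Rmult_le_compat_l; [apply Rdiv_le_0_compat; lra |].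
  apply Hfg; split.
  - assert (0 <= INR k * (b - a) / INR (S n)) by (apply Rdiv_le_0_compat; nra).
    lra.
  - assert (INR k * (b - a) / INR (S n) <= b - a).
    { apply Rle_div_l; nra. }
    lra.
Qed.

Lemma lsums_inhabited Q h : exists x, lsums Q h x.
Proof.
  exists (lsum (fun u => h (Q u)) (1 / 2) (1 / 2) 0), (1 / 2), (1 / 2), 0%nat.
  repeat split; lra.
Qed.

(* The constant [c3] is integrated over an interval of length at most 1. *)
Lemma lsums_le_affine Q h h1 h2 e1 e2 c1 c2 c3 :
  quantile Q -> 0 <= c1 -> 0 <= c2 -> 0 <= c3 ->
  (forall w, 0 <= w -> h w <= c1 * h1 w + c2 * h2 w + c3) ->
  Expect Q h1 e1 -> Expect Q h2 e2 ->
  forall x, lsums Q h x -> x <= c1 * e1 + c2 * e2 + c3.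
Proof.
  intros [HQ0 _] Hc1 Hc2 Hc3 Hh [He1 _] [He2 _] x [a [b [n [Ha [Hab [Hb ->]]]]]].
  apply Rle_trans with (lsum (fun u => c1 * h1 (Q u) + c2 * h2 (Q u) + c3) a b n).
  { apply lsum_le; [lra |]; intros u Hu; apply Hh, HQ0; lra. }
  rewrite (lsum_affine _ (fun u => h1 (Q u)) (fun u => h2 (Q u)) c1 c2 c3) by reflexivity.
  assert (lsum (fun u => h1 (Q u)) a b n <= e1) by (apply He1; exists a, b, n; auto).
  assert (lsum (fun u => h2 (Q u)) a b n <= e2) by (apply He2; exists a, b, n; auto).
  assert (c3 * (b - a) <= c3) by nra.
  apply Rplus_le_compat; [apply Rplus_le_compat |]; auto; apply Rmult_le_compat_l; auto.
Qed.

Lemma Expect_le_affine Q h h1 h2 e e1 e2 c1 c2 c3 :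
  quantile Q -> 0 <= c1 -> 0 <= c2 -> 0 <= c3 ->
  (forall w, 0 <= w -> h w <= c1 * h1 w + c2 * h2 w + c3) ->
  Expect Q h e -> Expect Q h1 e1 -> Expect Q h2 e2 ->
  e <= c1 * e1 + c2 * e2 + c3.
Proof.
  intros HQ Hc1 Hc2 Hc3 Hh [_ He] He1 He2.
  apply He; intros x Hx; eapply lsums_le_affine; eauto.
Qed.

Lemma Expect_scale Q h g c e :
  0 < c -> (forall w, g w = c * h w) -> Expect Q h e -> Expect Q g (c * e).
Proof.
  intros Hc Hg [Hub Hlub].
  assert (Hsum : forall a b n,
    lsum (fun u => g (Q u)) a b n = c * lsum (fun u => h (Q u)) a b n).
  { intros a b n.
    rewrite (lsum_affine _ (fun u => h (Q u)) (fun u => h (Q u)) c 0 0)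
      by (intros; rewrite Hg; ring).
    ring. }
  split.
  - intros x [a [b [n [Ha [Hab [Hb ->]]]]]].
    rewrite Hsum; apply Rmult_le_compat_l; [lra |].
    apply Hub; exists a, b, n; auto.
  - intros M HM.
    assert (HeM : e <= M / c).
    { apply Hlub; intros y [a [b [n [Ha [Hab [Hb ->]]]]]].
      apply Rle_div_r; [lra |]; rewrite Rmult_comm, <- Hsum.
      apply HM; exists a, b, n; auto. }
    apply Rle_div_r in HeM; lra.
Qed.

Lemma lipschitz_continuity f K :
  0 <= K -> (forall x y, Rabs (f y - f x) <= K * Rabs (y - x)) -> continuity f.
Proof.
  intros HK Hf x eps Heps.
  exists (eps / (K + 1)); split; [apply Rdiv_lt_0_compat; lra |].
  intros y [_ Hy]; simpl in *; unfold R_dist in *.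
  apply Rle_lt_trans with (K * Rabs (y - x)); [apply Hf |].
  apply Rlt_div_r in Hy; [| lra].
  pose proof (Rabs_pos (y - x)); nra.
Qed.

Lemma sinh_pos x : 0 < x -> 0 < sinh x.
Proof. intros Hx; rewrite <- sinh_0; apply sinh_lt, Hx. Qed.

Lemma sinh_lt_inv x y : sinh x < sinh y -> x < y.
Proof.
  intros Hs; destruct (Rlt_or_le x y) as [| [Hyx | <-]]; auto;
    [apply sinh_lt in Hyx |]; lra.
Qed.

Definition mf_integrand (a B z w : R) : R := tanh (a * w * z + B) * a * w.

Lemma mf_integrand_le_linear a B z w : 0 <= a -> 0 <= w ->
  mf_integrand a B z w <= a * w.
Proof.
  intros Ha Hw; unfold mf_integrand.
  pose proof (tanh_bounds (a * w * z + B)).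
  assert (0 <= a * w) by (apply Rmult_le_pos; lra).
  rewrite Rmult_assoc; nra.
Qed.

Lemma mf_integrand_lipschitz a B y z w : 0 <= a -> 0 <= w ->
  mf_integrand a B y w <= mf_integrand a B z w + a ^ 2 * Rabs (y - z) * w ^ 2.
Proof.
  intros Ha Hw; unfold mf_integrand.
  assert (Haw : 0 <= a * w) by (apply Rmult_le_pos; lra).
  pose proof (tanh_lipschitz (a * w * y + B) (a * w * z + B)) as Hlip.
  replace (a * w * y + B - (a * w * z + B)) with (a * w * (y - z)) in Hlip by ring.
  rewrite Rabs_mult, (Rabs_pos_eq (a * w)) in Hlip by exact Haw.
  apply Rabs_le_between in Hlip.
  rewrite !(Rmult_assoc (tanh _)).
  apply Rle_trans with ((tanh (a * w * z + B) + a * w * Rabs (y - z)) * (a * w)).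
  - apply Rmult_le_compat_r; lra.
  - right; ring.
Qed.

Lemma le_contraction_bound rho s z K : 0 < rho < 1 -> 0 <= z -> s <= 1 + rho / 2 ->
  z <= (1 - rho) * s * z + K -> rho * z <= 2 * K.
Proof.
  intros Hrho Hz Hs Hle.
  assert ((1 - rho) * s * z <= (1 - rho) * (1 + rho / 2) * z).
  { apply Rmult_le_compat_r; [lra |]; apply Rmult_le_compat_l; lra. }
  nra.
Qed.

Section MeanField.

Variables (Q : R -> R) (m1 m2 : R).
Hypotheses (HQ : quantile Q) (Hm1 : Expect Q (fun w => w) m1)
  (Hm2 : Expect Q (fun w => w ^ 2) m2) (Hm1_pos : 0 < m1).

Lemma second_moment_pos : 0 < m2.
Proof.
  assert (Hm : m1 <= / m1 * m2 + 0 * m2 + m1 / 4).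
  { apply (Expect_le_affine Q (fun w => w) (fun w => w ^ 2) (fun w => w ^ 2)); auto; try lra.
    - left; apply Rinv_0_lt_compat; lra.
    - intros w _.
      assert (0 <= (w - m1 / 2) ^ 2 * / m1).
      { apply Rmult_le_pos; [apply pow2_ge_0 | left; apply Rinv_0_lt_compat; lra]. }
      replace (/ m1 * w ^ 2 + 0 * w ^ 2 + m1 / 4) with ((w - m1 / 2) ^ 2 * / m1 + w)
        by (field; lra).
      lra. }
  apply (Rmult_lt_reg_l (/ m1)); [apply Rinv_0_lt_compat |]; lra.
Qed.

Lemma sinh_betac : sinh (betac m1 m2) = m1 / m2.
Proof.
  pose proof second_moment_pos.
  unfold betac; rewrite sinh_arcsinh; field; lra.
Qed.

Lemma betac_pos : 0 < betac m1 m2.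
Proof.
  apply sinh_lt_inv; rewrite sinh_0, sinh_betac.
  pose proof second_moment_pos; apply Rdiv_lt_0_compat; lra.
Qed.

Lemma alpha_sq beta : 0 < beta -> alpha m1 beta ^ 2 = sinh beta / m1.
Proof.
  intros Hbeta; unfold alpha; rewrite pow2_sqrt; [reflexivity |].
  apply Rdiv_le_0_compat; [left; apply sinh_pos |]; lra.
Qed.

Lemma alpha_pos beta : 0 < beta -> 0 < alpha m1 beta.
Proof.
  intros Hbeta; apply sqrt_lt_R0, Rdiv_lt_0_compat; [apply sinh_pos |]; lra.
Qed.

Lemma Zstar_le beta B z eta : 0 <= B -> 0 < eta -> Zstar Q m1 beta B z ->
  z <= (1 - tanh eta ^ 2) * (alpha m1 beta ^ 2 * m2) * z
       + (tanh eta ^ 2 * eta + B) * (alpha m1 beta * m1).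
Proof.
  intros HB Heta [Hz HE].
  set (a := alpha m1 beta) in *; set (rho := tanh eta ^ 2).
  assert (Ha : 0 <= a) by apply sqrt_pos.
  assert (Hrho : 0 < rho < 1).
  { pose proof (tanh_pos eta Heta); pose proof (tanh_bounds eta); unfold rho; split; nra. }
  assert (Hbound : z <= ((1 - rho) * a ^ 2 * z) * m2 + ((rho * eta + B) * a) * m1 + 0).
  { apply (Expect_le_affine Q (mf_integrand a B z) (fun w => w ^ 2) (fun w => w));
      auto; try lra.
    - apply Rmult_le_pos; [apply Rmult_le_pos |]; nra.
    - apply Rmult_le_pos; nra.
    - intros w Hw.
      assert (Hx : 0 <= a * w * z) by (apply Rmult_le_pos; [apply Rmult_le_pos |]; lra).
      pose proof (tanh_addr_le (a * w * z) B Hx HB).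
      pose proof (tanh_le_affine eta (a * w * z) Heta Hx).
      assert (Haw : 0 <= a * w) by (apply Rmult_le_pos; lra).
      apply Rle_trans with (((1 - rho) * (a * w * z) + rho * eta + B) * (a * w)).
      + unfold mf_integrand.
        replace (tanh (a * w * z + B) * a * w) with (tanh (a * w * z + B) * (a * w)) by ring.
        apply Rmult_le_compat_r; [| unfold rho]; lra.
      + right; ring. }
  lra.
Qed.

Lemma alpha_sq_m2_lt beta c : 0 < beta -> beta < arcsinh (c * (m1 / m2)) ->
  alpha m1 beta ^ 2 * m2 < c.
Proof.
  intros Hbeta Hlt; pose proof second_moment_pos.
  apply sinh_lt in Hlt; rewrite sinh_arcsinh in Hlt.
  rewrite alpha_sq by exact Hbeta.
  replace (sinh beta / m1 * m2) with (sinh beta / (m1 / m2)) by (field; lra).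
  apply Rlt_div_l; [apply Rdiv_lt_0_compat |]; lra.
Qed.

Lemma Zstar_small eps : 0 < eps -> exists delta, 0 < delta /\
  forall beta B z, betac m1 m2 <= beta < betac m1 m2 + delta -> 0 < B < delta ->
    Zstar Q m1 beta B z -> z < eps.
Proof.
  intros Heps.
  pose proof second_moment_pos; pose proof betac_pos.
  set (A := (2 / m2 + 1) * m1).
  assert (HA : 0 < A).
  { assert (0 < 2 / m2) by (apply Rdiv_lt_0_compat; lra).
    apply Rmult_lt_0_compat; lra. }
  set (eta := eps / (4 * A)).
  assert (Heta : 0 < eta) by (apply Rdiv_lt_0_compat; lra).
  set (rho := tanh eta ^ 2).
  assert (Hrho : 0 < rho < 1).
  { pose proof (tanh_pos eta Heta); pose proof (tanh_bounds eta); unfold rho; split; nra. }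
  set (beta1 := arcsinh ((1 + rho / 2) * (m1 / m2))).
  assert (Hbeta1 : betac m1 m2 < beta1).
  { assert (0 < m1 / m2) by (apply Rdiv_lt_0_compat; lra).
    apply sinh_lt_inv; unfold beta1; rewrite sinh_arcsinh, sinh_betac; nra. }
  exists (Rmin (beta1 - betac m1 m2) (rho * eta)).
  split; [apply Rmin_pos; nra |].
  intros beta B z [Hb1 Hb2] [HB1 HB2] HZ.
  pose proof (Rmin_l (beta1 - betac m1 m2) (rho * eta)).
  pose proof (Rmin_r (beta1 - betac m1 m2) (rho * eta)).
  pose proof (alpha_pos beta ltac:(lra)) as Ha.
  assert (Hs : alpha m1 beta ^ 2 * m2 < 1 + rho / 2) by (apply alpha_sq_m2_lt; fold beta1; lra).
  assert (HaA : alpha m1 beta * m1 <= A).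
  { unfold A; apply Rmult_le_compat_r; [lra |].
    assert (alpha m1 beta ^ 2 <= 2 / m2) by (apply (Rle_div_r (alpha m1 beta ^ 2)); lra).
    nra. }
  pose proof (le_contraction_bound rho _ z _ Hrho (Rlt_le _ _ (proj1 HZ)) (Rlt_le _ _ Hs)
    (Zstar_le beta B z eta ltac:(lra) Heta HZ)) as Hz; fold rho in Hz.
  assert (Hsource : (rho * eta + B) * (alpha m1 beta * m1) < rho * eps / 2).
  { assert (rho * eta * A = rho * eps / 4) by (unfold eta; field; lra).
    assert (0 < alpha m1 beta * m1) by (apply Rmult_lt_0_compat; lra).
    nra. }
  nra.
Qed.

Section Existence.

Variables beta B : R.
Hypotheses (Hbeta : 0 < beta) (HB : 0 < B).

Let a := alpha m1 beta.

Lemma lsums_mf_integrand_bound z : bound (lsums Q (mf_integrand a B z)).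
Proof.
  exists (a * m1 + 0 * m1 + 0); intros x.
  apply (lsums_le_affine Q _ (fun w => w) (fun w => w)); auto; try lra.
  - apply sqrt_pos.
  - intros w Hw; pose proof (mf_integrand_le_linear a B z w (sqrt_pos _) Hw); lra.
Qed.

Definition mf_rhs (z : R) : R :=
  proj1_sig (completeness _ (lsums_mf_integrand_bound z) (lsums_inhabited Q _)).

Lemma Expect_mf_rhs z : Expect Q (mf_integrand a B z) (mf_rhs z).
Proof. exact (proj2_sig (completeness _ _ _)). Qed.

Lemma mf_rhs_lipschitz y z : Rabs (mf_rhs y - mf_rhs z) <= a ^ 2 * m2 * Rabs (y - z).
Proof.
  assert (Hside : forall y z, mf_rhs y <= mf_rhs z + a ^ 2 * m2 * Rabs (y - z)).
  { intros y' z'.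
    assert (Hc : 0 <= a ^ 2 * Rabs (y' - z')) by (pose proof (Rabs_pos (y' - z')); nra).
    replace (mf_rhs z' + a ^ 2 * m2 * Rabs (y' - z'))
      with (1 * mf_rhs z' + a ^ 2 * Rabs (y' - z') * m2 + 0) by ring.
    apply (Expect_le_affine Q (mf_integrand a B y') (mf_integrand a B z') (fun w => w ^ 2));
      auto using Expect_mf_rhs; try lra.
    intros w Hw; pose proof (mf_integrand_lipschitz a B y' z' w (sqrt_pos _) Hw); lra. }
  pose proof (Hside y z); pose proof (Hside z y).
  rewrite (Rabs_minus_sym z y) in *.
  apply Rabs_le_between; lra.
Qed.

Lemma mf_rhs_0 : mf_rhs 0 = tanh B * a * m1.
Proof.
  apply (is_lub_u (lsums Q (mf_integrand a B 0))); [apply Expect_mf_rhs |].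
  apply (Expect_scale Q (fun w => w)); auto.
  - apply Rmult_lt_0_compat; [apply tanh_pos | apply alpha_pos]; auto.
  - intros w; unfold mf_integrand; rewrite Rmult_0_r, Rplus_0_l; ring.
Qed.

Lemma Zstar_exists : exists z, Zstar Q m1 beta B z.
Proof.
  assert (Ha : 0 < a) by (apply alpha_pos; auto).
  assert (HF0 : 0 < mf_rhs 0).
  { rewrite mf_rhs_0; pose proof (tanh_pos B HB).
    apply Rmult_lt_0_compat; [apply Rmult_lt_0_compat |]; lra. }
  assert (Hcont : continuity (fun z => z - mf_rhs z)).
  { apply (lipschitz_continuity _ (1 + a ^ 2 * m2)).
    - pose proof second_moment_pos; nra.
    - intros x y; pose proof (mf_rhs_lipschitz y x).
      pose proof (Rabs_triang (y - x) (- (mf_rhs y - mf_rhs x))).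
      rewrite Rabs_Ropp in *.
      replace (y - mf_rhs y - (x - mf_rhs x)) with (y - x + - (mf_rhs y - mf_rhs x)) by ring.
      lra. }
  set (Y := a * m1 + 1).
  assert (HFY : mf_rhs Y <= a * m1 + 0 * m1 + 0).
  { apply (Expect_le_affine Q (mf_integrand a B Y) (fun w => w) (fun w => w));
      auto using Expect_mf_rhs; try lra.
    intros w Hw; pose proof (mf_integrand_le_linear a B Y w (sqrt_pos _) Hw); lra. }
  destruct (IVT _ 0 Y Hcont) as [z [Hz Hfix]].
  - assert (0 < a * m1) by (apply Rmult_lt_0_compat; lra); unfold Y; lra.
  - lra.
  - unfold Y in *; lra.
  - assert (Hz0 : z <> 0) by (intros ->; lra).
    assert (Hfz : mf_rhs z = z) by lra.
    pose proof (Expect_mf_rhs z) as HE; rewrite Hfz in HE.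
    exists z; split; [lra | exact HE].
Qed.

End Existence.

Lemma Zstar_cv_0 (beta B z : nat -> R) :
  (forall l, betac m1 m2 <= beta l) -> (forall l, 0 < B l) ->
  Un_cv beta (betac m1 m2) -> Un_cv B 0 ->
  (forall l, Zstar Q m1 (beta l) (B l) (z l)) -> Un_cv z 0.
Proof.
  intros Hbeta HB Hcv_beta Hcv_B HZ eps Heps.
  destruct (Zstar_small eps Heps) as [d [Hd Hsmall]].
  destruct (Hcv_beta d Hd) as [N1 HN1]; destruct (Hcv_B d Hd) as [N2 HN2].
  exists (Nat.max N1 N2); intros n Hn; unfold R_dist in *.
  specialize (HN1 n ltac:(lia)); specialize (HN2 n ltac:(lia)).
  apply Rabs_lt_between' in HN1, HN2.
  pose proof (proj1 (HZ n)).
  rewrite Rminus_0_r, Rabs_pos_eq by lra.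
  apply (Hsmall (beta n) (B n)); auto; split; auto; lra.
Qed.

Lemma Zstar_critical_small eps : 0 < eps -> exists delta, 0 < delta /\
  forall B z, 0 < B < delta -> Zstar Q m1 (betac m1 m2) B z -> Rabs z < eps.
Proof.
  intros Heps; destruct (Zstar_small eps Heps) as [d [Hd Hsmall]].
  exists d; split; auto; intros B z HB HZ.
  pose proof (proj1 HZ); rewrite Rabs_pos_eq by lra.
  apply (Hsmall (betac m1 m2) B); auto; lra.
Qed.

Lemma Zstar_limit_small eps : 0 < eps -> exists delta, 0 < delta /\
  forall beta L, betac m1 m2 < beta < betac m1 m2 + delta ->
    (forall eps', 0 < eps' -> exists d', 0 < d' /\
       forall B z, 0 < B < d' -> Zstar Q m1 beta B z -> Rabs (z - L) < eps') ->
    Rabs L < eps.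
Proof.
  intros Heps; destruct (Zstar_small (eps / 2) ltac:(lra)) as [d [Hd Hsmall]].
  exists d; split; auto; intros beta L Hbeta HL.
  destruct (HL (eps / 2) ltac:(lra)) as [d' [Hd' HzL]].
  pose proof (Rmin_l d d'); pose proof (Rmin_r d d'); pose proof (Rmin_pos d d' Hd Hd').
  pose proof betac_pos.
  set (B := Rmin d d' / 2).
  destruct (Zstar_exists beta B ltac:(lra) ltac:(unfold B; lra)) as [z HZ].
  pose proof (HzL B z ltac:(unfold B; lra) HZ) as Hclose; apply Rabs_lt_between' in Hclose.
  pose proof (Hsmall beta B z ltac:(lra) ltac:(unfold B; lra) HZ).
  pose proof (proj1 HZ).
  apply Rabs_def1; lra.
Qed.

End MeanField.

Theorem mainTheorem5 (Q : R -> R) (m1 m2 : R)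
  (HQ : quantile Q)
  (Hm1 : Expect Q (fun w => w) m1)
  (Hm2 : Expect Q (fun w => w ^ 2) m2)
  (Hpos : 0 < m1) :
  (* main claim *)
  (forall (beta B z : nat -> R),
     (forall l, beta (S l) <= beta l) ->
     (forall l, B (S l) <= B l) ->
     (forall l, betac m1 m2 <= beta l) ->
     (forall l, 0 < B l) ->
     Un_cv beta (betac m1 m2) ->
     Un_cv B 0 ->
     (forall l, Zstar Q m1 (beta l) (B l) (z l)) ->
     Un_cv z 0)
  /\
  (* lim_{B \searrow 0} z^*(beta_c, B) = 0 *)
  (forall eps, 0 < eps -> exists delta, 0 < delta /\
     forall B z, 0 < B < delta -> Zstar Q m1 (betac m1 m2) B z -> Rabs z < eps)
  /\
  (* lim_{beta \searrow beta_c} z^*(beta, 0+) = 0, where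
     z^*(beta,0+) = L is the limit of z^*(beta,B) as B \searrow 0 *)
  (forall eps, 0 < eps -> exists delta, 0 < delta /\
     forall beta L, betac m1 m2 < beta < betac m1 m2 + delta ->
       (forall eps', 0 < eps' -> exists d', 0 < d' /\
          forall B z, 0 < B < d' -> Zstar Q m1 beta B z -> Rabs (z - L) < eps') ->
       Rabs L < eps).
Proof.
  split; [| split].
  -
    intros beta B z _ _; exact (Zstar_cv_0 Q m1 m2 HQ Hm1 Hm2 Hpos beta B z).
  - exact (Zstar_critical_small Q m1 m2 HQ Hm1 Hm2 Hpos).
  - exact (Zstar_limit_small Q m1 m2 HQ Hm1 Hm2 Hpos).
Qed.
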